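(* If $G$ is a connected graph of maximum degree at most $3$, then $\gamma_e(G)\leq\frac{1}{3}(n(G)+2)$.
   Context: All graphs are finite, simple and undirected; $n(G)=|V(G)|$. For a graph $G$, a set $S\subseteq V(G)$, and vertices $u,v$ with $u\in S$ or $v\in S$, ${\rm dist}_{(G,S)}(u,v)$ is the minimum number of edges of a path $P$ in $G$ between $u$ and $v$ such that $S$ contains exactly one endvertex of $P$ and no internal vertex of $P$, and $\infty$ if no such path exists (so ${\rm dist}_{(G,S)}(u,u)=0$ for $u\in S$). For $u\in V(G)$, $w_{(G,S)}(u)=\sum_{v\in S}(1/2)^{{\rm dist}_{(G,S)}(u,v)-1}$ with $(1/2)^{\infty}=0$. $S$ is an exponential dominating set of $G$ if $w_{(G,S)}(u)\geq 1$ for every $u\in V(G)$, and $\gamma_e(G)$ is the minimum cardinality of an exponential dominating set of $G$. *)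

From HB Require Import structures.
From mathcomp Require Import all_boot all_order all_algebra.
Set Implicit Arguments. Unset Strict Implicit. Unset Printing Implicit Defensive.
Import Order.TTheory GRing.Theory Num.Theory.

(* A finite simple graph: vertex type T (finType), edge relation e that is
   symmetric and irreflexive. A path is x :: p with path e x p, uniq. *)

Section ExpDom.
Variables (T : finType) (e : rel T).

Definition internal (x : T) (p : seq T) : seq T := behead (belast x p).

(* x :: p is a path in G between u and v such that S contains exactly one
   endvertex of it (the endvertex set is {u, v}, so for u = v the trivial
   path counts when u \in S) and no internal vertex. *)
Definition good_path (S : {set T}) (u v : T) (x : T) (p : seq T) : bool :=
  [&& x == u, last x p == v, path e x p, uniq (x :: p),
      #|[set u; v] :&: S| == 1 & all (fun y => y \notin S) (internal x p)].

Definition has_good_path (S : {set T}) (u v : T) (k : nat) : bool :=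
  [exists t : k.-tuple T, good_path S u v u t].

(* dist_(G,S)(u,v): Some d = minimum length, None = infinity.
   (Simple paths have fewer than #|T| edges.) *)
Definition distS (S : {set T}) (u v : T) : option nat :=
  let k := find (has_good_path S u v) (iota 0 #|T|) in
  if k < #|T| then Some k else None.

Definition weight (S : {set T}) (u : T) : rat :=
  \sum_(v in S) match distS S u v with
                | Some d => ((1 / 2 : rat) ^ (d%:Z - 1))%R
                | None => 0%R
                end.

Definition exp_dominating (S : {set T}) : Prop :=
  forall u : T, (1 <= weight S u)%R.

End ExpDom.

(* Root a spanning tree of G at one of its leaves, so that every vertex has at
   most two children, and build S bottom-up.  Weight is certified by families of
   paths ending at distinct vertices of S with no internal vertex in S: a path
   of length d contributes (1/2)^(d-1), and extending it by one edge halves the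
   contribution.  The subtree below v is summarised by a profile (o, n, x): the
   weight it sends to the parent of v, the weight v must receive from outside
   for the subtree to be dominated, and the slack in 3|S| + 3 <= |subtree| + x.
   A finite check shows that if every child subtree realises all profiles of
   one of four classes, then so does the subtree of v; at the root this gives
   3|S| + 3 <= n + 5. *)

From HB Require Import structures.
From mathcomp Require Import all_boot all_order all_algebra.
From mathcomp Require Import zify ring lra.
Set Implicit Arguments. Unset Strict Implicit. Unset Printing Implicit Defensive.
Import Order.TTheory GRing.Theory Num.Theory.

Section PathFamilies.
Variables (T : finType) (e : rel T).
Local Open Scope ring_scope.
Implicit Types (S A B : {set T}) (u v x y : T) (p : seq T) (q : rat).

Definition dist_term S u v : rat :=
  if distS e S u v is Some d then (1 / 2) ^ (d%:Z - 1) else 0.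

Lemma dist_term_ge0 S u v : 0 <= dist_term S u v.
Proof. by rewrite /dist_term; case: distS => // d; apply: exprz_ge0. Qed.

Lemma half_powzE (d : nat) : (1 / 2 : rat) ^ (d%:Z - 1) = 2 * (1 / 2) ^+ d.
Proof. by rewrite expfzDr //= exprN1 invf_div divr1 mulrC. Qed.

Lemma distS_le_size S u v p : good_path e S u v u p ->
  exists2 d, distS e S u v = Some d & (d <= size p)%N.
Proof.
move=> gp; have /and5P [_ _ _ /card_uniqP /= usize _] := gp.
have size_lt : (size p < #|T|)%N by rewrite -usize max_card.
have has_p : has_good_path e S u v (size p) by apply/existsP; exists (in_tuple p).
rewrite /distS; set k := find _ _.
have k_le : (k <= size p)%N.
  rewrite leqNgt; apply/negP => /(before_find 0%N).
  by rewrite nth_iota // add0n has_p.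
by exists k; rewrite ?(leq_ltn_trans k_le size_lt).
Qed.

Definition path_value p : rat := 2 * (1 / 2) ^+ size p.

Lemma path_value_le S u v p : good_path e S u v u p -> path_value p <= dist_term S u v.
Proof.
move=> /distS_le_size [d dist_eq d_le].
rewrite /dist_term dist_eq half_powzE ler_pM2l //.
exact: ler_wiXn2l.
Qed.

Definition feeder_path S y A p : bool :=
  [&& path e y p, uniq p, (p != [::]) && all (mem A) p, last y p \in S
    & all [predC S] (internal y p)].

Definition feeder_family S y A (F : seq (seq T)) : bool :=
  uniq (map (last y) F) && all (feeder_path S y A) F.

Definition receives S y A q :=
  exists2 F, feeder_family S y A F & q <= \sum_(p <- F) path_value p.

Lemma feeder_last S y A p : feeder_path S y A p -> last y p \in A.
Proof.
case/and5P => _ _ /andP []; case: p => // a p _ pA _ _.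
exact: (allP pA) (mem_last a p).
Qed.

Lemma sum_uniq_le_setsum (A : {set T}) (s : seq T) (f : T -> rat) :
  uniq s -> {subset s <= A} -> (forall i, 0 <= f i) ->
  \sum_(i <- s) f i <= \sum_(i in A) f i.
Proof.
move=> us sA f0; rewrite big_uniq // [X in X <= _]big_mkcond [X in _ <= X]big_mkcond.
by apply: ler_sum => i _; case: ifP => [/sA -> | _] //; case: ifP.
Qed.

Lemma receives_weight S u A q : u \notin S -> u \notin A ->
  receives S u A q -> q <= weight e S u.
Proof.
move=> uS uA [F /andP [uF /allP feedF] le_q]; apply: (le_trans le_q).
apply: (@le_trans _ _ (\sum_(p <- F) dist_term S u (last u p))).
  rewrite big_seq [X in _ <= X]big_seq; apply: ler_sum => p /feedF fp.
  apply: path_value_le; have /and5P [pp up /andP [_ pA] pl pi] := fp.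
  have upA : u \notin p by apply: contra uA => /(allP pA).
  have endS : [set u; last u p] :&: S = [set last u p].
    apply/setP => z; rewrite !inE; case: (eqVneq z u) => [-> | _] /=.
      by rewrite (negPf uS); apply/esym/eqP => eq_u; rewrite -eq_u (negPf uS) in pl.
    by case: (eqVneq z (last u p)) => [-> |].
  by apply/and5P; split; rewrite /= ?upA ?up ?endS ?cards1 ?pp ?pi.
rewrite -(big_map (last u) xpredT (dist_term S u)).
apply: sum_uniq_le_setsum => //; last exact: dist_term_ge0.
by move=> _ /mapP [p /feedF /and5P [_ _ _ pl _] ->].
Qed.

Lemma distS_self S u : u \in S -> distS e S u u = Some 0%N.
Proof.
move=> uS; have has0 : has_good_path e S u u 0.
  apply/existsP; exists [tuple]; rewrite /good_path /= eqxx /= setUid.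
  by rewrite (setIidPl _) ?cards1 // sub1set.
have : (0 < #|T|)%N by apply/card_gt0P; exists u.
by rewrite /distS; case: #|T| => // N _; rewrite /= has0.
Qed.

Lemma weight_mem S u : u \in S -> 1 <= weight e S u.
Proof.
move=> uS; rewrite /weight (bigD1 u) //= distS_self // half_powzE expr0 mulr1.
set rest := \sum_(_ | _) _; have : 0 <= rest by apply: sumr_ge0 => v _; apply: dist_term_ge0.
lra.
Qed.

Lemma receives0 S y A : receives S y A 0.
Proof. by exists [::]; rewrite ?big_nil. Qed.

Lemma receives_le S y A q q' : q' <= q -> receives S y A q -> receives S y A q'.
Proof. by move=> le_q [F fF le_F]; exists F => //; apply: le_trans le_q le_F. Qed.

Lemma receivesU S y A1 A2 q1 q2 : [disjoint A1 & A2] ->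
  receives S y A1 q1 -> receives S y A2 q2 -> receives S y (A1 :|: A2) (q1 + q2).
Proof.
move=> dis [F1 /andP [u1 /allP f1] le1] [F2 /andP [u2 /allP f2] le2].
exists (F1 ++ F2); last by rewrite big_cat lerD.
rewrite /feeder_family map_cat cat_uniq u1 u2 /= andbT all_cat; apply/andP; split.
  apply/hasPn => _ /mapP [p /f2 /feeder_last pA2 ->]; apply/mapP => [[p' /f1 /feeder_last]].
  by move=> pA1 eq_last; rewrite -eq_last in pA1; rewrite (disjointFr dis pA1) in pA2.
have mono A' B' F : A' \subset B' -> all (feeder_path S y A') F -> all (feeder_path S y B') F.
  move=> /subsetP AB; apply: sub_all => p /and5P [pp up /andP [pn pA] pl pi].
  by rewrite /feeder_path pp up pn pl pi /= andbT; apply: sub_all pA => z /AB.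
by apply/andP; split; [apply: (mono A1) | apply: (mono A2)];
  rewrite ?subsetUl ?subsetUr //; apply/allP.
Qed.

Lemma receives_edge S y A x : x \in S -> x \in A -> e y x -> receives S y A 1.
Proof.
move=> xS xA yx; exists [:: [:: x]]; first by rewrite /feeder_family /feeder_path /= yx xA xS.
by rewrite big_seq1 /path_value expr1; lra.
Qed.

Lemma receives_cons S y A B x q : x \notin S -> x \in A -> e y x ->
  B \subset A -> x \notin B -> receives S x B q -> receives S y A (q / 2).
Proof.
move=> xS xA yx /subsetP BA xB [F /andP [uF /allP fF] le_q].
exists (map (cons x) F).
  rewrite /feeder_family -map_comp (eq_map (g := last x)) // uF /=.
  apply/allP => _ /mapP [p /fF /and5P [pp up /andP [pn pB] pl pi] ->].
  have xp : x \notin p by apply: contra xB => /(allP pB).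
  rewrite /feeder_path /= yx pp xp up xA pl /=; apply/andP; split.
    by apply: sub_all pB => z /BA.
  by case: p pn {pp up pB pl xp} pi => // a p _; rewrite /internal /= xS.
rewrite big_map (eq_bigr (fun p => path_value p / 2)) -?mulr_suml ?ler_pM2r //.
by move=> p _; rewrite /path_value /= exprS; field.
Qed.

Definition dominates S (D : {set T}) := {in D, forall u, 1 <= weight e S u}.

Definition agree_on (D S1 S2 : {set T}) := {in D, forall z, (z \in S1) = (z \in S2)}.

Lemma internal_sub y p : {subset internal y p <= p}.
Proof. by case: p => // a p z; apply: mem_belast. Qed.

Lemma receives_agree S1 S2 y A q :
  agree_on A S1 S2 -> receives S1 y A q -> receives S2 y A q.
Proof.
move=> agr [F /andP [uF /allP fF] le_q]; exists F => //; rewrite /feeder_family uF /=.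
apply/allP => p /fF fp; have lA := feeder_last fp.
move: fp => /and5P [pp up /andP [pn pA] pl pi].
rewrite /feeder_path pp up pn pA -agr ?pl //=; apply/allP => z zi.
move: (allP pi z zi); rewrite /= agr //; exact: (allP pA z (internal_sub zi)).
Qed.

End PathFamilies.

Definition parent_map (T : finType) (g : rel T) (r : T) (par : T -> T) (depth : T -> nat) :=
  depth r = 0 /\ forall x, x != r -> g x (par x) /\ (depth (par x)).+1 = depth x.

Section BreadthFirstSearch.
Variables (T : finType) (g : rel T) (r : T).
Hypothesis g_sym : symmetric g.
Hypothesis g_conn : forall x, connect g r x.

Definition ball k :=
  iter k (fun A : {set T} => A :|: [set y | [exists x in A, g x y]]) [set r].

Lemma ball_step k x y : x \in ball k -> g x y -> y \in ball k.+1.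
Proof.
by move=> xk gxy; rewrite /ball iterS !inE; apply/orP; right; apply/existsP; exists x; rewrite xk.
Qed.

Lemma ball_path a p k : a \in ball k -> path g a p -> last a p \in ball (k + size p).
Proof.
elim: p a k => [|b p IH] a k /=; first by rewrite addn0.
by move=> ak /andP [gab pp]; rewrite addnS -addSn; apply: IH (ball_step ak gab) pp.
Qed.

Lemma ball_exists x : exists k, x \in ball k.
Proof.
by have /connectP [p pp ->] := g_conn x; exists (0 + size p); apply: ball_path; rewrite ?inE.
Qed.

Definition level x : nat := ex_minn (ball_exists x).

Lemma level_ball x : x \in ball (level x).
Proof. by rewrite /level; case: ex_minnP. Qed.

Lemma level_min x k : x \in ball k -> level x <= k.
Proof. by rewrite /level; case: ex_minnP => m _ min_m /min_m. Qed.

Lemma level_root : level r = 0.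
Proof. by apply/eqP; rewrite -leqn0; apply: level_min; rewrite inE. Qed.

Lemma level_parent x : x != r -> exists y, g x y && ((level y).+1 == level x).
Proof.
move=> xr; have := level_ball x; case E: (level x) => [|k].
  by rewrite inE (negPf xr).
rewrite /ball iterS inE => /orP [xk | /[!inE] /existsP [y /andP [yk gyx]]].
  by have := level_min xk; rewrite E ltnn.
exists y; rewrite g_sym gyx /=; have := level_min (ball_step (level_ball y) gyx).
by have := level_min yk; rewrite E; lia.
Qed.

Lemma exists_parent_map : exists par depth, parent_map g r par depth.
Proof.
pose par x := odflt x [pick y | g x y && ((level y).+1 == level x)].
exists par, level; split=> [|x xr]; first exact: level_root.
rewrite /par; case: pickP => [y /andP [gxy /eqP] // | none].
by have [y] := level_parent xr; rewrite none.
Qed.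

End BreadthFirstSearch.

Section RootedTree.
Variables (T : finType) (g : rel T) (r : T) (par : T -> T) (depth : T -> nat).
Hypothesis par_map : parent_map g r par depth.

Lemma depth_par x : x != r -> (depth (par x)).+1 = depth x.
Proof. by case: par_map => _ /(_ x) h /h []. Qed.

Lemma g_par x : x != r -> g x (par x).
Proof. by case: par_map => _ /(_ x) h /h []. Qed.

Lemma depth_eq0 x : depth x = 0 -> x = r.
Proof. by move=> dx; apply/eqP/negPn/negP => /depth_par; rewrite dx. Qed.

Lemma depth_iter k u : k <= depth u -> depth (iter k par u) = depth u - k.
Proof.
elim: k => [|k IH] le_k; first by rewrite subn0.
rewrite iterS; have dk := IH (ltnW le_k).
have kr : iter k par u != r by apply/eqP => kr; move: dk; rewrite kr; case: par_map => -> _; lia.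
by have := depth_par kr; rewrite dk; lia.
Qed.

Definition desc v := [set u | (depth v <= depth u) && (iter (depth u - depth v) par u == v)].
Definition children v := [set c | (c != r) && (par c == v)].

Lemma desc_refl v : v \in desc v.
Proof. by rewrite inE leqnn subnn /=. Qed.

Lemma desc_root : desc r = setT.
Proof.
case: par_map => dr _; apply/setP => u; rewrite !inE dr subn0 /=.
by apply/eqP/depth_eq0; rewrite depth_iter // subnn.
Qed.

Lemma child_depth c v : c \in children v -> depth c = (depth v).+1.
Proof. by rewrite inE => /andP [cr /eqP <-]; rewrite depth_par. Qed.

Lemma child_g c v : c \in children v -> g c v.
Proof. by rewrite inE => /andP [cr /eqP <-]; apply: g_par. Qed.

Lemma desc_child c v : c \in children v -> desc c \subset desc v.
Proof.
move=> cv; have dc := child_depth cv; move: cv; rewrite inE => /andP [cr /eqP pc].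
apply/subsetP => u; rewrite !inE => /andP [le_cu /eqP iter_u].
have -> : depth u - depth v = (depth u - depth c).+1 by lia.
by rewrite iterS iter_u pc eqxx andbT; lia.
Qed.

Lemma notin_desc_child c v : c \in children v -> v \notin desc c.
Proof. by move/child_depth => dc; rewrite inE dc ltnn. Qed.

Lemma card_desc_child c v : c \in children v -> #|desc c| < #|desc v|.
Proof.
move=> cv; rewrite (cardsD1 v (desc v)) desc_refl add1n ltnS subset_leq_card //.
apply/subsetP => u uc; rewrite in_setD1 (subsetP (desc_child cv) _ uc) andbT.
by apply: contraTneq uc => ->; apply: notin_desc_child.
Qed.

Lemma disjoint_desc_children c1 c2 v : c1 \in children v -> c2 \in children v ->
  c1 != c2 -> [disjoint desc c1 & desc c2].
Proof.
move=> cv1 cv2 ne; apply/pred0P => u /=; apply/negP => /andP [].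
rewrite !inE (child_depth cv1) (child_depth cv2) => /andP [_ /eqP e1] /andP [_ /eqP e2].
by rewrite -e1 -e2 eqxx in ne.
Qed.

Lemma descE v : desc v = v |: \bigcup_(c in children v) desc c.
Proof.
apply/setP => u; rewrite in_setU1; case: (eqVneq u v) => [-> | uv] /=; first by rewrite desc_refl.
apply/idP/bigcupP => [| [c cv uc]]; last exact: (subsetP (desc_child cv)).
rewrite inE => /andP [le_vu /eqP iter_u].
have k_gt0 : 0 < depth u - depth v.
  rewrite subn_gt0 ltn_neqAle le_vu andbT.
  by apply: contra_neq uv => dvu; rewrite -iter_u -dvu subnn.
set k := depth u - depth v in k_gt0 iter_u.
have dc : depth (iter k.-1 par u) = (depth v).+1 by rewrite depth_iter /k; lia.
exists (iter k.-1 par u).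
  rewrite inE -iterS prednK // iter_u eqxx andbT.
  by apply: contra_eqN dc => /eqP ->; case: par_map => ->.
rewrite inE dc; have -> : depth u - (depth v).+1 = k.-1 by rewrite /k; lia.
by rewrite eqxx andbT /k; lia.
Qed.

Definition branch v (D : {set T}) := D = set0 \/ exists2 c, c \in children v & D = desc c.

Lemma notin_branch v D : branch v D -> v \notin D.
Proof. by move=> [-> | [c cv ->]]; [rewrite inE | exact: notin_desc_child cv]. Qed.

Lemma desc_split v : #|children v| <= 2 -> exists D1 D2 : {set T},
  [/\ [disjoint D1 & D2], desc v = v |: (D1 :|: D2), branch v D1, branch v D2
    & #|children v| <= 1 -> D2 = set0].
Proof.
rewrite descE; case E: #|children v| => [|[|[|//]]] _.
- exists set0, set0; rewrite (cards0_eq E) big_set0 !setU0 -setI_eq0 setI0.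
  by split=> //; rewrite /branch; left.
- have /cards1P [c ch] : #|children v| == 1 by rewrite E.
  exists (desc c), set0; rewrite ch big_set1 !setU0 -setI_eq0 setI0.
  by split=> //; rewrite /branch; [right; exists c; rewrite ?ch ?inE | left].
- have /cards2P [c1 [c2 [ne ch]]] : #|children v| == 2 by rewrite E.
  have [cv1 cv2] : c1 \in children v /\ c2 \in children v by rewrite ch !inE !eqxx ?orbT.
  exists (desc c1), (desc c2); rewrite ch big_setU1 ?inE // big_set1.
  split=> //; first exact: (disjoint_desc_children cv1 cv2 ne).
  + by right; exists c1.
  + by right; exists c2.
Qed.

Lemma card_children_lt v : symmetric g -> v != r -> #|children v| < #|[set y | g v y]|.
Proof.
move=> g_sym vr; have pv : par v \in [set y | g v y] by rewrite inE g_par.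
rewrite (cardsD1 (par v) [set y | g v y]) pv add1n ltnS subset_leq_card //.
apply/subsetP => c cv; rewrite !inE -g_sym (child_g cv) andbT.
by apply/eqP => cpv; have := child_depth cv; rewrite cpv -(depth_par vr); lia.
Qed.

Lemma card_children_root : symmetric g -> #|children r| <= #|[set y | g r y]|.
Proof.
move=> g_sym; apply/subset_leq_card/subsetP => c cv.
by rewrite inE -g_sym (child_g cv).
Qed.

Definition tree_edge x y := ((x != r) && (par x == y)) || ((y != r) && (par y == x)).

Lemma tree_edge_sym : symmetric tree_edge.
Proof. by move=> x y; rewrite /tree_edge orbC. Qed.

Lemma sub_tree_edge : symmetric g -> subrel tree_edge g.
Proof.
by move=> g_sym x y /orP [] /andP [xr /eqP <-]; [apply: g_par | rewrite g_sym g_par].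
Qed.

Lemma connect_tree_edge x : connect tree_edge r x.
Proof.
have [n] := ubnP (depth x); elim: n x => // n IH x lt_x.
have [-> | xr] := eqVneq x r; first exact: connect0.
apply: connect_trans (IH (par x) _) (connect1 _); first by rewrite -ltnS depth_par.
by rewrite /tree_edge xr eqxx orbT.
Qed.

Lemma tree_edge_deepest l y : (forall z, depth z <= depth l) -> tree_edge l y -> y = par l.
Proof.
move=> l_max /orP [/andP [_ /eqP] // | /andP [yr /eqP pyl]].
by have := l_max y; rewrite -(depth_par yr) pyl; lia.
Qed.

End RootedTree.

Definition quarter (n : nat) : rat := (n%:R / 4)%R.

Section Quarter.
Local Open Scope ring_scope.

Lemma quarter0 : quarter 0 = 0.
Proof. by rewrite /quarter mul0r. Qed.

Lemma quarter4 : quarter 4 = 1.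
Proof. by rewrite /quarter divff. Qed.

Lemma quarterD m n : quarter m + quarter n = quarter (m + n).
Proof. by rewrite /quarter natrD mulrDl. Qed.

Lemma ler_quarter m n : (m <= n)%N -> quarter m <= quarter n.
Proof. by move=> le_mn; rewrite /quarter ler_pM2r // ler_nat. Qed.

Lemma ler_quarter_half m n : (2 * m <= n)%N -> quarter m <= quarter n / 2.
Proof.
rewrite -(ler_nat rat) natrM /quarter => le_mn.
by rewrite -mulrA [4^-1 / 2]mulrC mulrA ler_pM2r // ler_pdivlMr //; lra.
Qed.

End Quarter.

Definition profile := (nat * nat * nat)%type.

(* The two ways of building a profile (o, n, x) at a vertex v from profiles
   (o1, n1, x1), (o2, n2, x2) of its branches: [b] says whether v joins S;
   if it does not, v relays to each side half of what it receives. *)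
Definition combines (b : bool) (c1 c2 c : profile) : bool :=
  let: (o1, n1, x1) := c1 in let: (o2, n2, x2) := c2 in let: (o, n, x) := c in
  if b then (x1 + x2 + 3 <= x + 4) && (o <= 4)
  else [&& x1 + x2 <= x + 4, 2 * o <= o1 + o2, 4 <= o1 + o2 + n,
           2 * n1 <= o2 + n & 2 * n2 <= o1 + n].

Lemma combines_bounds b o1 n1 x1 o2 n2 x2 o n x :
  combines b (o1, n1, x1) (o2, n2, x2) (o, n, x) ->
  [/\ x1 + x2 + 3 * b <= x + 4, if b then o <= 4 else 2 * o <= o1 + o2,
      b || (4 <= o1 + o2 + n), b || (2 * n1 <= o2 + n) & b || (2 * n2 <= o1 + n)].
Proof. by case: b => /= [/andP [] | /and5P []]; split=> //; lia. Qed.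

Section Profiles.
Variables (T : finType) (e g : rel T) (r : T) (par : T -> T) (depth : T -> nat).
Hypothesis e_sym : symmetric e.
Hypothesis g_sub_e : subrel g e.
Hypothesis par_map : parent_map g r par depth.

Local Notation desc := (desc par depth).
Local Notation children := (children r par).
Local Notation receives := (receives e).
Local Notation dominates := (dominates e).
Local Open Scope ring_scope.
Implicit Types (v : T) (D S : {set T}).

(* Weights are counted in quarters: S delivers o/4 to the parent of v along
   paths inside the subtree of v, and every S' agreeing with S on the subtree
   dominates it once v receives n/4 from outside. *)
Definition subtree_profile v (c : profile) :=
  let: (o, n, x) := c in
  exists2 S : {set T}, S \subset desc v & [/\ (3 * #|S| + 3 <= #|desc v| + x)%N,
    v != r -> receives S (par v) (desc v) (quarter o)
  & forall S', agree_on (desc v) S' S ->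
      receives S' v (~: desc v) (quarter n) -> dominates S' (desc v)].

(* A branch D hanging at v, seen from v: the weight goes to v itself, and v must
   receive n/2 from outside D, half of which reaches the root of D. *)
Definition branch_dominated v D S n := forall S', agree_on D S' S ->
  v \in S' \/ (exists2 B : {set T}, [disjoint B & D] && (v \notin B)
                                 & receives S' v B (2 * quarter n)) ->
  dominates S' D.

Definition branch_profile v D S (c : profile) :=
  let: (o, n, x) := c in
  [/\ (3 * #|S| + 3 <= #|D| + x)%N,
    forall S', agree_on D S' S -> receives S' v D (quarter o)
  & branch_dominated v D S n].

Lemma branch_profile_subtree v c o n x : c \in children v -> (n <= 4)%N ->
  subtree_profile c (o, n, x) ->
  exists2 S : {set T}, S \subset desc c & branch_profile v (desc c) S (o, n, x).
Proof.
move=> cv n_le [S S_sub [card_S out_S dom_S]]; exists S => //.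
have cr : c != r by move: cv; rewrite inE => /andP [].
have pc : par c = v by move: cv; rewrite inE => /andP [_ /eqP].
have ecv : e c v by apply/g_sub_e/(child_g par_map cv).
have v_out : v \in ~: desc c by rewrite inE (notin_desc_child par_map cv).
split=> // S' agr; first by rewrite -pc; apply: receives_agree (out_S cr) => z /agr.
move=> feed_v; apply: dom_S => //; have [vS | vS] := boolP (v \in S').
  by apply: receives_le (receives_edge vS v_out ecv); rewrite -quarter4 ler_quarter.
case: feed_v => [vS' | [B /andP [dis_B vB] feed_B]]; first by rewrite vS' in vS.
rewrite (_ : quarter n = 2 * quarter n / 2); last by field.
by apply: receives_cons vS v_out ecv _ vB feed_B; rewrite -disjoints_subset.
Qed.

Lemma branch_profile0 v : branch_profile v set0 set0 (0, 0, 3)%N.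
Proof.
split=> [|S' _ |S' _ _ u]; rewrite ?cards0 ?inE //.
by rewrite quarter0; apply: receives0.
Qed.

Definition node_set b v S1 S2 : {set T} := (if b then [set v] else set0) :|: (S1 :|: S2).

Section Node.
Variables (v : T) (D1 D2 S1 S2 : {set T}) (b : bool).
Hypotheses (dis : [disjoint D1 & D2]) (dv : desc v = v |: (D1 :|: D2)).
Hypotheses (vD1 : v \notin D1) (vD2 : v \notin D2) (S1D1 : S1 \subset D1) (S2D2 : S2 \subset D2).
Local Notation S := (node_set b v S1 S2).

Lemma mem_node_set z : (z \in S) = (b && (z == v)) || (z \in S1) || (z \in S2).
Proof. by rewrite /node_set !inE; case: b; rewrite ?inE ?orbA. Qed.

Lemma node_set_sub : S \subset desc v.
Proof.
rewrite dv; apply/subsetP => z; rewrite mem_node_set !inE.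
by case/orP => [/orP [/andP [_ ->] | /(subsetP S1D1) ->] | /(subsetP S2D2) ->]; rewrite ?orbT.
Qed.

Lemma card_node_set : (#|S| <= b + #|S1| + #|S2|)%N.
Proof.
rewrite /node_set cardsU -addnA; apply: leq_trans (leq_subr _ _) (leq_add _ _).
  by case: b; rewrite ?cards1 ?cards0.
by rewrite cardsU leq_subr.
Qed.

Lemma card_desc_node : #|desc v| = (#|D1| + #|D2|).+1.
Proof.
by rewrite dv cardsU1 !inE (negPf vD1) (negPf vD2) cardsU (disjoint_setI0 dis) cards0 subn0.
Qed.

Lemma left_sub_desc : D1 \subset desc v.
Proof. by rewrite dv; apply/subsetP => z z1; rewrite !inE z1 orbT. Qed.

Lemma agree_node_left S' : agree_on (desc v) S' S -> agree_on D1 S' S1.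
Proof.
move=> agr z z1; rewrite agr ?mem_node_set; last by rewrite dv !inE z1 orbT.
have -> : (z == v) = false by apply: contraNF vD1 => /eqP <-.
have -> : (z \in S2) = false by apply: contraTF z1 => /(subsetP S2D2) /(disjointFl dis) ->.
by rewrite andbF orbF.
Qed.

Lemma node_mem S' : agree_on (desc v) S' S -> (v \in S') = b.
Proof.
move=> agr; rewrite agr ?mem_node_set ?eqxx ?andbT; last by rewrite dv setU11.
by rewrite (contraNF (subsetP S1D1 v)) ?(contraNF (subsetP S2D2 v)) ?orbF.
Qed.

Lemma node_receives_parent o12 o : v != r -> receives S v (D1 :|: D2) (quarter o12) ->
  (if b then o <= 4 else 2 * o <= o12)%N -> receives S (par v) (desc v) (quarter o).
Proof.
move=> vr feed12; have epv : e (par v) v by rewrite e_sym; apply/g_sub_e/(g_par par_map vr).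
have vv : v \in desc v by rewrite dv setU11.
move: feed12 (node_mem (fun z _ => erefl (z \in S))); case: b => feed12 vS o_le.
  by apply: receives_le (receives_edge vS vv epv); rewrite -quarter4 ler_quarter.
apply: receives_le (receives_cons (negbT vS) vv epv _ _ feed12); first exact: ler_quarter_half.
  by rewrite dv subsetUr.
by rewrite in_setU negb_or vD1 vD2.
Qed.

Lemma node_root_weight S' o12 n : agree_on (desc v) S' S ->
  receives S' v (D1 :|: D2) (quarter o12) -> receives S' v (~: desc v) (quarter n) ->
  b || (4 <= o12 + n)%N -> 1 <= weight e S' v.
Proof.
move=> agr feed12 feed_out; rewrite -(node_mem agr).
have [vS _ | vS /= le4] := boolP (v \in S'); first exact: weight_mem.
have dis_out : [disjoint D1 :|: D2 & ~: desc v] by rewrite disjoints_subset setCK dv subsetUr.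
apply: le_trans (receives_weight vS _ (receivesU dis_out feed12 feed_out)).
  by rewrite quarterD -quarter4 ler_quarter.
by rewrite !in_setU in_setC (negPf vD1) (negPf vD2) dv setU11.
Qed.

Lemma node_dominates_left S' o2 n1 n : agree_on (desc v) S' S ->
  branch_dominated v D1 S1 n1 -> receives S' v D2 (quarter o2) ->
  receives S' v (~: desc v) (quarter n) -> b || (2 * n1 <= o2 + n)%N -> dominates S' D1.
Proof.
move=> agr dom1 feed2 feed_out cond; apply: dom1 (agree_node_left agr) _.
have [vS | vS] := boolP (v \in S'); [by left | right].
have dis2 : [disjoint D2 & ~: desc v].
  by rewrite disjoints_subset setCK dv; apply/subsetP => z z2; rewrite !inE z2 !orbT.
exists (D2 :|: ~: desc v).
  rewrite disjoints_subset subUset setCS -disjoints_subset disjoint_sym dis left_sub_desc.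
  by rewrite in_setU in_setC negb_or negbK vD2 dv setU11.
move: cond; rewrite -(node_mem agr) (negPf vS) /= => /ler_quarter_half.
rewrite -quarterD => le_n1; apply: receives_le (receivesU dis2 feed2 feed_out).
by rewrite mulrC -ler_pdivlMr.
Qed.

End Node.

Lemma node_profile v D1 D2 S1 S2 b c1 c2 c :
  [disjoint D1 & D2] -> desc v = v |: (D1 :|: D2) -> v \notin D1 -> v \notin D2 ->
  S1 \subset D1 -> S2 \subset D2 -> branch_profile v D1 S1 c1 -> branch_profile v D2 S2 c2 ->
  combines b c1 c2 c -> subtree_profile v c.
Proof.
case: c1 c2 c => [[o1 n1] x1] [[o2 n2] x2] [[o n] x].
move=> dis dv vD1 vD2 S1D1 S2D2 [card1 out1 dom1] [card2 out2 dom2].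
case/combines_bounds => card_x out_o need_v need1 need2.
have dis' : [disjoint D2 & D1] by rewrite disjoint_sym.
have dv' : desc v = v |: (D2 :|: D1) by rewrite [D2 :|: D1]setUC.
have S_C : node_set b v S2 S1 = node_set b v S1 S2 by rewrite /node_set [S2 :|: S1]setUC.
have agr12 S' : agree_on (desc v) S' (node_set b v S1 S2) ->
    agree_on D1 S' S1 /\ agree_on D2 S' S2.
  move=> agr; split; first exact: (agree_node_left dis dv vD1 S2D2 agr).
  have agr' : agree_on (desc v) S' (node_set b v S2 S1) by rewrite S_C.
  exact: (agree_node_left dis' dv' vD2 S1D1 agr').
have feed12 S' : agree_on (desc v) S' (node_set b v S1 S2) ->
    receives S' v (D1 :|: D2) (quarter (o1 + o2)).
  move=> /agr12 [agr1 agr2]; rewrite -quarterD.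
  exact: (receivesU dis (out1 _ agr1) (out2 _ agr2)).
exists (node_set b v S1 S2); first exact: (node_set_sub b dv S1D1 S2D2).
split.
- by move: (card_node_set v S1 S2 b) (card_desc_node dis dv vD1 vD2); lia.
- move=> vr; apply: (node_receives_parent dv vD1 vD2 S1D1 S2D2 vr _ out_o).
  exact: (feed12 _ (fun z _ => erefl _)).
- move=> S' agr feed_out u; have [agr1 agr2] := agr12 S' agr.
  rewrite dv !inE => /orP [/eqP -> | /orP [u1 | u2]].
  + exact: (node_root_weight dv vD1 vD2 S1D1 S2D2 agr (feed12 S' agr) feed_out need_v).
  + move: u1; apply: (node_dominates_left dis dv vD1 vD2 S1D1 S2D2 agr dom1 _ feed_out need1).
    exact: out2 _ agr2.
  + have agr' : agree_on (desc v) S' (node_set b v S2 S1) by rewrite S_C.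
    move: u2; apply: (node_dominates_left dis' dv' vD2 vD1 S2D2 S1D1 agr' dom2 _ feed_out need2).
    exact: out1 _ agr1.
Qed.

End Profiles.

Definition profile_classes : seq (seq profile) :=
  [:: [:: (0, 4, 2); (4, 0, 5)]; [:: (4, 0, 3)]; [:: (4, 0, 4)]; [:: (2, 0, 3); (4, 0, 6)]].
Definition empty_branch : seq profile := [:: (0, 0, 3)].
Definition branch_classes := empty_branch :: profile_classes.

Definition combinable (C1 C2 : seq profile) (c : profile) : bool :=
  has (fun b => has (fun c1 => has (fun c2 => combines b c1 c2 c) C2) C1) [:: true; false].

Lemma profile_classes_closed : all (fun C1 => all (fun C2 =>
  has (fun C => all (combinable C1 C2) C) profile_classes) branch_classes) branch_classes.
Proof. by vm_compute. Qed.

Lemma root_combinable : all (fun C1 => combinable C1 empty_branch (0, 0, 5)) branch_classes.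
Proof. by vm_compute. Qed.

Lemma profile_classes_need_le4 : all (all (fun c => c.1.2 <= 4)) profile_classes.
Proof. by []. Qed.

Section Induction.
Variables (T : finType) (e g : rel T) (r : T) (par : T -> T) (depth : T -> nat).
Hypothesis e_sym : symmetric e.
Hypothesis g_sub_e : subrel g e.
Hypothesis par_map : parent_map g r par depth.
Hypothesis children_le2 : forall v, v != r -> #|children r par v| <= 2.

Local Notation desc := (desc par depth).
Local Notation children := (children r par).
Local Notation branch := (branch r par depth).

Definition realizes v (C : seq profile) := {in C, forall c, subtree_profile e r par depth v c}.

Definition branch_realizes v (D : {set T}) (C : seq profile) :=
  {in C, forall c, exists2 S : {set T}, S \subset D & branch_profile e v D S c}.

Lemma branch_realizes_class v (D : {set T}) : branch v D ->
  (forall c, c \in children v -> exists2 C, C \in profile_classes & realizes c C) ->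
  exists2 C, C \in branch_classes & branch_realizes v D C.
Proof.
move=> [-> | [c cv ->]] IH.
  exists empty_branch; first exact: mem_head.
  by move=> c /[!inE] /eqP ->; exists set0; [apply: sub0set | apply: branch_profile0].
have [C CP realC] := IH c cv; exists C; first by rewrite inE CP orbT.
move=> [[o n] x] cC; apply: (branch_profile_subtree g_sub_e par_map cv); last exact: realC.
by have /allP /(_ C CP) /allP /(_ _ cC) := profile_classes_need_le4.
Qed.

Lemma realizes_node v (D1 D2 : {set T}) (C1 C2 : seq profile) :
  [disjoint D1 & D2] -> desc v = v |: (D1 :|: D2) ->
  branch v D1 -> branch v D2 -> C1 \in branch_classes -> C2 \in branch_classes ->
  branch_realizes v D1 C1 -> branch_realizes v D2 C2 ->
  exists2 C, C \in profile_classes & realizes v C.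
Proof.
move=> dis dv bD1 bD2 C1P C2P real1 real2.
have /allP /(_ C1 C1P) /allP /(_ C2 C2P) /hasP [C CP /allP combC] := profile_classes_closed.
exists C => // c /combC /hasP [b _ /hasP [c1 c1C /hasP [c2 c2C comb]]].
have [S1 S1D1 prof1] := real1 c1 c1C; have [S2 S2D2 prof2] := real2 c2 c2C.
exact: (node_profile e_sym g_sub_e par_map dis dv (notin_branch par_map bD1)
  (notin_branch par_map bD2) S1D1 S2D2 prof1 prof2 comb).
Qed.

Lemma realizes_subtree v : v != r -> exists2 C, C \in profile_classes & realizes v C.
Proof.
have [m] := ubnP #|desc v|; elim: m v => // m IH v lt_vm vr.
have IHc c : c \in children v -> exists2 C, C \in profile_classes & realizes c C.
  move=> cv; apply: IH; first exact: leq_trans (card_desc_child par_map cv) (ltnSE lt_vm).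
  by move: cv; rewrite inE => /andP [].
have [D1 [D2 [dis dv bD1 bD2 _]]] := desc_split par_map (children_le2 vr).
have [C1 C1P real1] := branch_realizes_class bD1 IHc.
have [C2 C2P real2] := branch_realizes_class bD2 IHc.
exact: realizes_node dis dv bD1 bD2 C1P C2P real1 real2.
Qed.

Lemma exp_dominating_bound : #|children r| <= 1 ->
  exists S : {set T}, exp_dominating e S /\ 3 * #|S| <= #|T| + 2.
Proof.
move=> root_le1.
have IHc c : c \in children r -> exists2 C, C \in profile_classes & realizes c C.
  by move=> cv; apply: realizes_subtree; move: cv; rewrite inE => /andP [].
have [D1 [D2 [dis dv bD1 _ D2_0]]] := desc_split par_map (leq_trans root_le1 (isT : 1 <= 2)).
move: dis dv; rewrite D2_0 // => dis dv.
have [C1 C1P real1] := branch_realizes_class bD1 IHc.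
have /allP /(_ C1 C1P) /hasP [b _ /hasP [c1 c1C /hasP [c2 /[!inE] /eqP -> comb]]] :=
  root_combinable.
have [S1 S1D1 prof1] := real1 c1 c1C.
have [S _ [card_S _ dom_S]] := node_profile e_sym g_sub_e par_map dis dv (notin_branch par_map bD1)
  (negbT (in_set0 r)) S1D1 (sub0set set0) prof1 (branch_profile0 e r) comb.
exists S; split; last by move: card_S; rewrite (desc_root par_map) cardsT; lia.
move=> u; apply: (dom_S S) => //; last by rewrite (desc_root par_map).
by rewrite quarter0; apply: receives0.
Qed.

End Induction.

Lemma exists_leaf_rooted_tree (T : finType) (e : rel T) (r0 : T) :
  symmetric e -> (forall x, connect e r0 x) -> exists (t : rel T) l par depth,
  [/\ symmetric t, subrel t e, parent_map t l par depth & #|children l par l| <= 1].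
Proof.
move=> e_sym e_conn; have [p0 [d0 pm0]] := exists_parent_map e_sym e_conn.
pose l := [arg max_(x > r0) d0 x].
have l_max z : d0 z <= d0 l by rewrite /l; case: arg_maxnP => // x _; apply.
pose t := tree_edge r0 p0; have t_sym : symmetric t := tree_edge_sym r0 p0.
have t_conn x : connect t l x.
  apply: connect_trans (connect_tree_edge pm0 x).
  by rewrite (sym_connect_sym t_sym); apply: connect_tree_edge pm0 l.
have [par [depth pm]] := exists_parent_map t_sym t_conn.
exists t, l, par, depth; split=> //; first exact: sub_tree_edge pm0 e_sym.
apply: leq_trans (card_children_root pm t_sym) _; rewrite -(cards1 (p0 l)).
by apply/subset_leq_card/subsetP => y /[!inE] /(tree_edge_deepest pm0 l_max) ->.
Qed.

Theorem theorem3 (T : finType) (e : rel T)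
  (e_sym : symmetric e) (e_irr : irreflexive e)
  (e_conn : forall x y : T, connect e x y)
  (e_deg : forall x : T, #|[set y | e x y]| <= 3) :
  exists S : {set T}, exp_dominating e S /\ 3 * #|S| <= #|T| + 2.
Proof.
have [r0 _ | T0] := pickP (fun _ : T => true); last first.
  by exists set0; split=> [u | ]; [have := T0 u | rewrite cards0].
have [t [l [par [depth [t_sym t_e pm root_le1]]]]] := exists_leaf_rooted_tree e_sym (e_conn r0).
apply: (exp_dominating_bound e_sym t_e pm _ root_le1) => v vl; rewrite -ltnS.
apply: leq_trans (card_children_lt pm t_sym vl) (leq_trans _ (e_deg v)).
by apply/subset_leq_card/subsetP => y /[!inE] /t_e.
Qed.
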